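(* Let $\delta>1$, $\gamma>0$, $A_s,A_u>0$, $\rho_s,\rho_u>0$ with $\rho_u<\rho_s$, and write $a=\frac{\delta-1}{\delta}$. For $L>0$ define \[ s^*(L)=\left[\gamma^{-\delta}A_s^{\delta-1}L\right]^{\frac{1}{1+\delta\rho_s}},\quad u^*(L)=\left[\gamma^{-\delta}A_u^{\delta-1}L\right]^{\frac{1}{1+\delta\rho_u}}, \] \[ w_s^*(L)=\gamma\, s^*(L)^{\rho_s},\quad w_u^*(L)=\gamma\, u^*(L)^{\rho_u}, \] and for $x>0$ define $\overline{w}(x)=\dfrac{\left[A_u^{a}+A_s^{a}x^{a}\right]^{\frac{\delta}{\delta-1}}}{1+x}$ and $\pi(x)=\left(\frac{A_s}{A_u}\right)^{a}x^{-1/\delta}$. Then: (i) $s^*,u^*,w_s^*,w_u^*$ are strictly increasing in $L$; (ii) $s^*(L)/u^*(L)$ is strictly decreasing in $L$, and on any open interval $I\subset(0,\infty)$ such that the skill premium satisfies $\pi\big(s^*(L)/u^*(L)\big)>1$ for all $L\in I$, the average wage $L\mapsto\overline{w}\big(s^*(L)/u^*(L)\big)$ is strictly decreasing on $I$.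
   Context: Model of the legal labor market: skilled ($s$) and unskilled ($u$) workers with labor supply $j=(w_j/\gamma)^{1/\rho_j}$; a competitive firm produces legal services with CES technology $L=\left[(A_u u)^{\frac{\delta-1}{\delta}}+(A_s s)^{\frac{\delta-1}{\delta}}\right]^{\frac{\delta}{\delta-1}}$ and pays marginal products $w_j=A_j^{\frac{\delta-1}{\delta}}(L/j)^{1/\delta}$; $L>0$ is treated as an exogenous demand parameter (raised by local bankruptcy filings). $s^*,u^*,w_s^*,w_u^*$ are the equilibrium quantities and wages, $\pi$ is the skill premium $w_s/w_u$ expressed through $x=s/u$, and $\overline{w}$ is the average wage $(uw_u+sw_s)/(u+s)$ expressed through $x=s/u$. *)

From Stdlib Require Import Reals.
From Coquelicot Require Import Rbar.
Open Scope R_scope.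

Definition aexp (del : R) : R := (del - 1) / del.

Definition sstar (gam As del rhos L : R) : R :=
  Rpower (Rpower gam (- del) * Rpower As (del - 1) * L) (1 / (1 + del * rhos)).

Definition ustar (gam Au del rhou L : R) : R :=
  Rpower (Rpower gam (- del) * Rpower Au (del - 1) * L) (1 / (1 + del * rhou)).

Definition wsstar (gam As del rhos L : R) : R :=
  gam * Rpower (sstar gam As del rhos L) rhos.

Definition wustar (gam Au del rhou L : R) : R :=
  gam * Rpower (ustar gam Au del rhou L) rhou.

Definition wbar (Au As del x : R) : R :=
  Rpower (Rpower Au (aexp del) + Rpower As (aexp del) * Rpower x (aexp del))
         (del / (del - 1)) / (1 + x).

Definition skill_premium (Au As del x : R) : R :=
  Rpower (As / Au) (aexp del) * Rpower x (- (1 / del)).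

From Stdlib Require Import Reals.
From Coquelicot Require Import Rbar.
From Stdlib Require Import Lra.
Open Scope R_scope.

(* Both equilibrium quantities are power laws in the demand parameter,
   [s*(L) = C_s L^(1/(1+δρ_s))] and [u*(L) = C_u L^(1/(1+δρ_u))], so they
   increase with [L], while [s*/u*] is a power of [L] with the negative exponent
   [1/(1+δρ_s) - 1/(1+δρ_u)].  With [a = (δ-1)/δ], the average wage has
   derivative
     [w̄'(x) = S(x)^(1/(δ-1)) (A_s^a x^(a-1) - A_u^a) / (1+x)^2],
   [S(x) = A_u^a + A_s^a x^a], and [A_s^a x^(a-1) = A_u^a π(x)], so [w̄'] has
   the sign of [π - 1].  As [π] is decreasing, [π > 1] at the right end of an
   interval of [x] forces [w̄] to increase on it; composing with the decreasing
   map [L ↦ s*/u*] makes [w̄] decrease in [L]. *)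

Lemma Rpower_pos x y : 0 < Rpower x y.
Proof. apply exp_pos. Qed.

Lemma Rlt_Rpower_l_neg a b c : c < 0 -> 0 < a < b -> Rpower b c < Rpower a c.
Proof.
  intros hc [ha hab]; unfold Rpower; apply exp_increasing.
  assert (ln a < ln b) by (apply ln_increasing; lra).
  nra.
Qed.

Lemma Rpower_plus_1 x e : 0 < x -> Rpower x (e + 1) = Rpower x e * x.
Proof. intros hx; rewrite Rpower_plus, Rpower_1 by exact hx; reflexivity. Qed.

Lemma Rpower_div_same_base x e1 e2 :
  Rpower x e1 / Rpower x e2 = Rpower x (e1 - e2).
Proof.
  unfold Rminus; rewrite Rpower_plus, Rpower_Ropp; reflexivity.
Qed.

(* [ustar] and [wustar] are [sstar] and [wsstar] evaluated at the unskilled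
   parameters (the definitions are convertible), so each lemma below serves both. *)

Lemma sstar_pos gam A del rho L : 0 < sstar gam A del rho L.
Proof. apply Rpower_pos. Qed.

Lemma sstar_lt gam A del rho L1 L2 :
  0 < del -> 0 < rho -> 0 < L1 -> L1 < L2 ->
  sstar gam A del rho L1 < sstar gam A del rho L2.
Proof.
  intros hdel hrho h1 h12; unfold sstar.
  assert (hK : 0 < Rpower gam (- del) * Rpower A (del - 1))
    by (apply Rmult_lt_0_compat; apply Rpower_pos).
  apply Rlt_Rpower_l.
  - apply Rdiv_lt_0_compat; nra.
  - split; nra.
Qed.

Lemma wsstar_lt gam A del rho L1 L2 :
  0 < gam -> 0 < del -> 0 < rho -> 0 < L1 -> L1 < L2 ->
  wsstar gam A del rho L1 < wsstar gam A del rho L2.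
Proof.
  intros hgam hdel hrho h1 h12; unfold wsstar.
  apply Rmult_lt_compat_l; [exact hgam|].
  apply Rlt_Rpower_l; [exact hrho|].
  split; [apply sstar_pos | apply sstar_lt; assumption].
Qed.

Lemma sstar_power_law gam A del rho L : 0 < L ->
  sstar gam A del rho L =
  Rpower (Rpower gam (- del) * Rpower A (del - 1)) (1 / (1 + del * rho)) *
  Rpower L (1 / (1 + del * rho)).
Proof.
  intros hL; unfold sstar.
  rewrite Rpower_mult_distr; [reflexivity | | exact hL].
  apply Rmult_lt_0_compat; apply Rpower_pos.
Qed.

Lemma sstar_div_lt gam A1 A2 del rho1 rho2 L1 L2 :
  0 < del -> 0 < rho2 -> rho2 < rho1 -> 0 < L1 -> L1 < L2 ->
  sstar gam A1 del rho1 L2 / sstar gam A2 del rho2 L2 <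
  sstar gam A1 del rho1 L1 / sstar gam A2 del rho2 L1.
Proof.
  intros hdel hrho2 hrho h1 h12.
  set (C1 := Rpower (Rpower gam (- del) * Rpower A1 (del - 1)) (1 / (1 + del * rho1))).
  set (C2 := Rpower (Rpower gam (- del) * Rpower A2 (del - 1)) (1 / (1 + del * rho2))).
  assert (hratio : forall L, 0 < L ->
    sstar gam A1 del rho1 L / sstar gam A2 del rho2 L =
    C1 / C2 * Rpower L (1 / (1 + del * rho1) - 1 / (1 + del * rho2))).
  { intros L hL; rewrite !sstar_power_law, <- (Rpower_div_same_base L) by exact hL.
    fold C1 C2; field; split; apply Rgt_not_eq, Rpower_pos. }
  rewrite !hratio by lra.
  apply Rmult_lt_compat_l.
  - apply Rdiv_lt_0_compat; apply Rpower_pos.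
  - apply Rlt_Rpower_l_neg; [|lra].
    assert (1 / (1 + del * rho1) < 1 / (1 + del * rho2)); [|lra].
    assert (del * rho2 < del * rho1) by (apply Rmult_lt_compat_l; lra).
    assert (0 < del * rho2) by (apply Rmult_lt_0_compat; lra).
    apply Rmult_lt_compat_l; [lra|].
    apply Rinv_lt_contravar; nra.
Qed.

Definition ces_sum (Au As del x : R) : R :=
  Rpower Au (aexp del) + Rpower As (aexp del) * Rpower x (aexp del).

Lemma skill_premium_lt Au As del x1 x2 :
  0 < del -> 0 < x1 -> x1 < x2 ->
  skill_premium Au As del x2 < skill_premium Au As del x1.
Proof.
  intros hdel h1 h12; unfold skill_premium.
  apply Rmult_lt_compat_l; [apply Rpower_pos|].
  apply Rlt_Rpower_l_neg; [|lra].
  assert (0 < 1 / del) by (apply Rdiv_lt_0_compat; lra).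
  lra.
Qed.

Lemma skill_premium_marginal Au As del x :
  0 < Au -> 0 < As -> 0 < del ->
  Rpower Au (aexp del) * skill_premium Au As del x =
  Rpower As (aexp del) * Rpower x (aexp del - 1).
Proof.
  intros hAu hAs hdel; unfold skill_premium.
  replace (aexp del - 1) with (- (1 / del)) by (unfold aexp; field; lra).
  rewrite <- Rmult_assoc, Rmult_comm with (r1 := Rpower Au _).
  rewrite Rpower_mult_distr by (try apply Rdiv_lt_0_compat; lra).
  replace (As / Au * Au) with As by (field; lra).
  reflexivity.
Qed.

Lemma ces_sum_pos Au As del x : 0 < ces_sum Au As del x.
Proof.
  unfold ces_sum.
  pose proof (Rpower_pos Au (aexp del)); pose proof (Rpower_pos As (aexp del)).
  pose proof (Rpower_pos x (aexp del)); nra.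
Qed.

Lemma derivable_pt_lim_ces_sum Au As del x : 0 < x ->
  derivable_pt_lim (ces_sum Au As del) x
    (Rpower As (aexp del) * (aexp del * Rpower x (aexp del - 1))).
Proof.
  intros hx; rewrite <- (Rplus_0_l (Rpower As _ * _)).
  apply (derivable_pt_lim_plus (fun _ => Rpower Au (aexp del))
           (fun y => Rpower As (aexp del) * Rpower y (aexp del))).
  - apply derivable_pt_lim_const.
  - apply (derivable_pt_lim_scal (fun y => Rpower y (aexp del))).
    apply derivable_pt_lim_power; exact hx.
Qed.

Lemma derivable_pt_lim_wbar Au As del x :
  1 < del -> 0 < x ->
  derivable_pt_lim (wbar Au As del) x
    (Rpower (ces_sum Au As del x) (1 / (del - 1)) *
     (Rpower As (aexp del) * Rpower x (aexp del - 1) - Rpower Au (aexp del)) /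
     (1 + x)²).
Proof.
  intros hdel hx.
  set (a := aexp del); set (p := del / (del - 1)).
  set (S := ces_sum Au As del x); set (T := Rpower S (1 / (del - 1))).
  assert (dF : derivable_pt_lim (fun y => Rpower (ces_sum Au As del y) p) x
                 (p * Rpower S (p - 1) * (Rpower As a * (a * Rpower x (a - 1))))).
  { apply (derivable_pt_lim_comp (ces_sum Au As del) (fun z => Rpower z p)).
    - apply derivable_pt_lim_ces_sum; exact hx.
    - apply derivable_pt_lim_power, ces_sum_pos. }
  assert (d1 : derivable_pt_lim (fun y => 1 + y) x (0 + 1)).
  { apply (derivable_pt_lim_plus (fun _ => 1) (fun y => y)).
    - apply derivable_pt_lim_const.
    - apply derivable_pt_lim_id. }
  pose proof (derivable_pt_lim_div _ _ x _ _ dF d1 ltac:(lra)) as dW.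
  cbv beta in dW; fold S in dW.
  (* [S^p = S^(p-1) S] and [p a = 1] collapse the quotient-rule numerator. *)
  assert (hp : p = 1 / (del - 1) + 1) by (unfold p; field; lra).
  assert (hSp : Rpower S p = T * S)
    by (rewrite hp; apply Rpower_plus_1, ces_sum_pos).
  assert (hxa : Rpower x a = Rpower x (a - 1) * x).
  { rewrite <- Rpower_plus_1 by exact hx; f_equal; ring. }
  assert (hpa : p * a = 1) by (unfold p, a, aexp; field; lra).
  assert (hnum : p * Rpower S (p - 1) * (Rpower As a * (a * Rpower x (a - 1))) * (1 + x)
                 - (0 + 1) * Rpower S p =
                 T * (Rpower As a * Rpower x (a - 1) - Rpower Au a)).
  { replace (p - 1) with (1 / (del - 1)) by (rewrite hp; ring).
    rewrite hSp; fold T; unfold S, ces_sum; fold a; rewrite hxa.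
    transitivity (T * ((p * a) * Rpower As a * Rpower x (a - 1) * (1 + x)
                       - (Rpower Au a + Rpower As a * Rpower x (a - 1) * x)));
      [ring | rewrite hpa; ring]. }
  rewrite hnum in dW; exact dW.
Qed.

Lemma wbar_lt Au As del x1 x2 :
  1 < del -> 0 < Au -> 0 < As -> 0 < x1 -> x1 < x2 ->
  1 < skill_premium Au As del x2 -> wbar Au As del x1 < wbar Au As del x2.
Proof.
  intros hdel hAu hAs h1 h12 hprem.
  destruct (MVT_cor2 (wbar Au As del) _ x1 x2 h12
              (fun c hc => derivable_pt_lim_wbar Au As del c hdel ltac:(lra)))
    as [c [hmvt hc]].
  enough (hmarg : 0 < Rpower As (aexp del) * Rpower c (aexp del - 1) - Rpower Au (aexp del)).
  { assert (0 < (1 + c)²) by (unfold Rsqr; nra).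
    assert (0 < Rpower (ces_sum Au As del c) (1 / (del - 1)) *
                (Rpower As (aexp del) * Rpower c (aexp del - 1) -
                 Rpower Au (aexp del)) / (1 + c)²).
    { apply Rdiv_lt_0_compat; [apply Rmult_lt_0_compat; [apply Rpower_pos|]|];
        assumption. }
    nra. }
  rewrite <- (skill_premium_marginal Au As del c) by lra.
  assert (skill_premium Au As del x2 < skill_premium Au As del c)
    by (apply skill_premium_lt; lra).
  pose proof (Rpower_pos Au (aexp del)).
  nra.
Qed.

Theorem proposition2 (del gam As Au rhos rhou : R)
  (hdel : 1 < del) (hgam : 0 < gam) (hAs : 0 < As) (hAu : 0 < Au)
  (hrhos : 0 < rhos) (hrhou : 0 < rhou) (hrho : rhou < rhos) :
  (* (i) strictly increasing in L on (0, oo) *)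
  (forall L1 L2, 0 < L1 -> L1 < L2 ->
     sstar gam As del rhos L1 < sstar gam As del rhos L2 /\
     ustar gam Au del rhou L1 < ustar gam Au del rhou L2 /\
     wsstar gam As del rhos L1 < wsstar gam As del rhos L2 /\
     wustar gam Au del rhou L1 < wustar gam Au del rhou L2) /\
  (* (ii) s*/u* strictly decreasing in L *)
  (forall L1 L2, 0 < L1 -> L1 < L2 ->
     sstar gam As del rhos L2 / ustar gam Au del rhou L2
     < sstar gam As del rhos L1 / ustar gam Au del rhou L1) /\
  (* (ii) on any open interval I = (a, b) of (0, oo) (b possibly +oo) on which
     the skill premium exceeds 1, the average wage is strictly decreasing *)
  (forall (a : R) (b : Rbar), 0 <= a -> Rbar_lt a b ->
     (forall L, a < L -> Rbar_lt L b ->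
        1 < skill_premium Au As del
              (sstar gam As del rhos L / ustar gam Au del rhou L)) ->
     forall L1 L2, a < L1 -> L1 < L2 -> Rbar_lt L2 b ->
       wbar Au As del (sstar gam As del rhos L2 / ustar gam Au del rhou L2)
       < wbar Au As del (sstar gam As del rhos L1 / ustar gam Au del rhou L1)).
Proof.
  assert (hdel0 : 0 < del) by lra.
  split; [|split].
  - intros L1 L2 h1 h12.
    repeat split; [apply sstar_lt | apply sstar_lt | apply wsstar_lt | apply wsstar_lt];
      assumption.
  - intros L1 L2 h1 h12; apply sstar_div_lt; assumption.
  - intros a b ha hab hprem L1 L2 h1 h12 h2b.
    apply wbar_lt; try assumption.
    + apply Rdiv_lt_0_compat; apply sstar_pos.
    + apply sstar_div_lt; lra.
    + apply hprem; [exact h1|].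
      apply Rbar_lt_trans with (y := Finite L2); [exact h12 | exact h2b].
Qed.
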